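(* Let $\mathcal Q$ be a collection of probability measures on $\{0,1\}^{\mathbb N}$, let $\varepsilon\ge 0$, and let $\mathcal Q_\varepsilon=\{q^1,q^2,\dots\}\subset[0,1]^{\mathbb N}$ be a countable (finite or countably infinite), enumerated set such that for every $q\in\mathrm{Mean}(\mathcal Q)$ there is an index $i$ with $\|q-q^i\|_\infty\le\varepsilon$. For a sample $S=(X^{(1)},\dots,X^{(n)})$, let $\hat q_j=\frac1n\sum_{k=1}^n X^{(k)}_j$ be the empirical mean, and let $\tilde q_n(S)=q^{i}$ where $i$ is the smallest index such that $|q^{i}_j-\hat q_j|\le\sqrt{\tfrac{3\log n}{n}}+\varepsilon$ for all $j\in\{1,\dots,n-1\}$ (the output is undefined if no such index exists). Then for every $\mu\in\mathcal Q$, with $q=\mathrm{Mean}(\mu)$ and $X^{(1)},X^{(2)},\dots$ an i.i.d. sequence with law $\mu$ (with $\tilde q_n$ computed from the first $n$ points), almost surely there exists $n_0$ such that for all $n>n_0$, $\tilde q_n$ is defined and $\|\tilde q_n-q\|_\infty\le\varepsilon$.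
   Context: $\{0,1\}^{\mathbb N}$ carries the product $\sigma$-algebra. For a probability measure $\mu$ on $\{0,1\}^{\mathbb N}$, $\mathrm{Mean}(\mu)\in[0,1]^{\mathbb N}$ is the vector whose $j$-th coordinate is $\mathbb E[X_j]$ for $X\sim\mu$. For a collection $\mathcal Q$ of such measures, $\mathrm{Mean}(\mathcal Q)=\{\mathrm{Mean}(\mu):\mu\in\mathcal Q\}$. Logarithms are natural. *)

From HB Require Import structures.
From mathcomp Require Import all_boot all_order all_algebra.
From mathcomp Require Import all_classical all_reals all_analysis.
Set Implicit Arguments. Unset Strict Implicit. Unset Printing Implicit Defensive.
Import Order.TTheory GRing.Theory Num.Theory.
Local Open Scope classical_set_scope.
Local Open Scope ring_scope.

Definition coord_gen : set (set (nat -> bool)) :=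
  [set (fun x : nat -> bool => x j) @^-1` B | j in [set: nat] & B in [set: set bool]].

Definition bits_space : Type := g_sigma_algebraType coord_gen.
HB.instance Definition _ := Measurable.on bits_space.

Definition Mean (R : realType) (mu : probability bits_space R) (j : nat) : R :=
  fine (\int[mu]_(x in [set: bits_space]) ((x j : nat)%:R)%:E)%E.

Definition emp_mean (R : realType) (n : nat) (S : nat -> nat -> bool) (j : nat) : R :=
  n%:R^-1 * \sum_(k < n) ((S k j : nat)%:R).

Arguments emp_mean {R} n S j.

(* Acceptance condition of index i: |q^i_j - qhat_j| <= sqrt(3 log n / n) + eps
   for all (paper) coordinates j in {1,...,n-1}, i.e. Rocq coordinates j < n-1. *)
Definition accepts (R : realType) (qs : nat -> nat -> R) (eps : R) (n : nat)
    (S : nat -> nat -> bool) (i : nat) : Prop :=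
  forall j : nat, (j < n.-1)%N ->
    `|qs i j - emp_mean n S j| <= Num.sqrt (3 * ln (n%:R : R) / (n%:R : R)) + eps.

(* tilde q_n(S) = q^i where i is the smallest index of the enumeration I
   satisfying the acceptance condition. [estimator_index ... i] says that
   the estimator is defined and its output is q^i. *)
Definition estimator_index (R : realType) (I : set nat) (qs : nat -> nat -> R)
    (eps : R) (n : nat) (S : nat -> nat -> bool) (i : nat) : Prop :=
  I i /\ accepts qs eps n S i /\
  (forall i' : nat, (i' < i)%N -> I i' -> ~ accepts qs eps n S i').

Definition iid_with_law (R : realType) (d : measure_display) (Omega : measurableType d)
    (P : probability Omega R) (X : nat -> Omega -> bits_space)
    (mu : probability bits_space R) : Prop :=
  (forall k, measurable_fun [set: Omega] (X k)) /\
  forall (s : seq nat) (A : nat -> set bits_space),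
    uniq s -> (forall k, measurable (A k)) ->
    P (\big[setI/setT]_(k <- s) (X k @^-1` A k)) = (\prod_(k <- s) mu (A k))%E.

From HB Require Import structures.
From mathcomp Require Import all_boot all_order all_algebra.
From mathcomp Require Import all_classical all_reals all_analysis.
From mathcomp Require Import ring lra zify.
Import Order.TTheory GRing.Theory Num.Theory.
Local Open Scope classical_set_scope.
Local Open Scope ring_scope.

(* A Chernoff bound for the Bernoulli coordinates shows that, at sample size n,
   some coordinate j < n-1 has empirical mean farther than
   t_n = sqrt (3 log n / n) from its true mean with probability at most
   2 n exp (- n t_n^2) = 2 / n^2. These probabilities are summable, so by
   Borel-Cantelli almost surely all these empirical means are eventually
   t_n-close. On that event the index i* of an eps-cover of Mean mu is
   eventually accepted, while each of the finitely many indices i < i* whose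
   vector is not eps-close to Mean mu differs from it at a fixed coordinate by
   more than eps + 2 t_n once t_n is small, hence is eventually rejected. *)

Section chernoff.
Variable R : realType.

Definition bernoulli_mass (p : R) (b : bool) : R := if b then p else 1 - p.

Lemma bernoulli_mass_ge0 (p : R) b : 0 <= p <= 1 -> 0 <= bernoulli_mass p b.
Proof. by case/andP=> p0 p1; case: b => /=; lra. Qed.

Lemma expR_le1Dx_sqr (x : R) : -1 <= x -> x <= 1/3 -> expR x <= 1 + x + x ^+ 2.
Proof.
move=> x_ge x_le.
have expR_mulN (y : R) : expR y * expR (- y) = 1 by rewrite -expRD subrr expR0.
have [x_le0|x_gt0] := lerP x 0.
  have := expR_ge1Dx (- x); have := expR_mulN x; have := expR_gt0 x; nra.
(* for positive x, square the bound [expR (x/2) <= 1/(1 - x/2)] *)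
set y := x / 2.
have xE : x = 2 * y by rewrite /y; field.
have expR_y : expR y * (1 - y) <= 1.
  have := expR_ge1Dx (- y); have := expR_mulN y; have := expR_gt0 y; nra.
have expR_x : expR x = expR y ^+ 2 by rewrite -expRM_natl xE.
have poly_y : 1 <= (1 + 2 * y + (2 * y) ^+ 2) * (1 - y) ^+ 2 by nra.
have sqr_le1 : (expR y * (1 - y)) ^+ 2 <= 1.
  by rewrite expr_le1 //; apply: mulr_ge0; [exact: ltW (expR_gt0 _) | nra].
rewrite expR_x xE; have := expR_gt0 y; nra.
Qed.

Lemma bernoulli_mgf_le (p l : R) : 0 <= p <= 1 -> -(1/3) <= l <= 1/3 ->
  (1 - p) + p * expR l <= expR (l * p + l ^+ 2 / 4).
Proof.
move=> /andP[p0 p1] /andP[l0 l1].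
have expR_lo := @expR_le1Dx_sqr (- (l * p)) ltac:(nra) ltac:(nra).
have expR_hi := @expR_le1Dx_sqr (l * (1 - p)) ltac:(nra) ltac:(nra).
have var_le : p * (1 - p) <= 1 / 4 by have := sqr_ge0 (p - 1 / 2); rewrite expr2; lra.
(* centred mgf: [(1-p) e^{-lp} + p e^{l(1-p)} <= 1 + l^2 p (1-p) <= e^{l^2/4}] *)
have centred : (1 - p) * expR (- (l * p)) + p * expR (l * (1 - p)) <= expR (l ^+ 2 / 4).
  apply: le_trans (expR_ge1Dx _).
  have := sqr_ge0 l; nra.
have expR_lp_inv : expR (l * p) * expR (- (l * p)) = 1 by rewrite -expRD subrr expR0.
have expR_l : expR (l * p) * expR (l * (1 - p)) = expR l by rewrite -expRD; congr expR; ring.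
have lhsE : (1 - p) + p * expR l =
    expR (l * p) * ((1 - p) * expR (- (l * p)) + p * expR (l * (1 - p))).
  by rewrite mulrDr mulrCA expR_lp_inv mulr1 mulrCA expR_l.
by rewrite lhsE expRD ler_wpM2l // ltW // expR_gt0.
Qed.

Implicit Types (n : nat) (p l m t : R).

Let succ_count {n} (v : {ffun 'I_n -> bool}) : R := \sum_(k < n) (v k : nat)%:R.

Lemma sum_prod_bernoulli_expR n p l :
  \sum_(v : {ffun 'I_n -> bool})
     \prod_(k < n) (bernoulli_mass p (v k) * expR (l * (v k : nat)%:R))
  = ((1 - p) + p * expR l) ^+ n.
Proof.
rewrite -(bigA_distr_bigA (fun _ b => bernoulli_mass p b * expR (l * (b : nat)%:R))) /=.
by rewrite big_bool /= mulr0 expR0 !mulr1 addrC prodr_const card_ord.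
Qed.

Lemma chernoff_tail_le n p l m : 0 <= p <= 1 -> -(1/3) <= l <= 1/3 ->
  \sum_(v : {ffun 'I_n -> bool} | 0 <= l * (succ_count v - m))
     \prod_(k < n) bernoulli_mass p (v k)
  <= expR (- (l * m) + n%:R * (l * p + l ^+ 2 / 4)).
Proof.
move=> hp hl.
pose mass (v : {ffun 'I_n -> bool}) := \prod_(k < n) bernoulli_mass p (v k).
have mass_ge0 v : 0 <= mass v by apply: prodr_ge0 => k _; exact: bernoulli_mass_ge0.
have markov : \sum_(v | 0 <= l * (succ_count v - m)) mass v
    <= \sum_v mass v * expR (l * (succ_count v - m)).
  rewrite [leLHS]big_mkcond /=; apply: ler_sum => v _; case: ifP => hv.
    by rewrite -[leLHS]mulr1 ler_wpM2l // (le_trans _ (expR_ge1Dx _)) ?lerDl.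
  by rewrite mulr_ge0 // ltW // expR_gt0.
have factor : \sum_v mass v * expR (l * (succ_count v - m))
    = expR (- (l * m)) * ((1 - p) + p * expR l) ^+ n.
  rewrite -sum_prod_bernoulli_expR mulr_sumr; apply: eq_bigr => v _.
  rewrite big_split /= mulrCA; congr (_ * _).
  by rewrite -expR_sum -expRD mulrBr mulr_sumr addrC.
apply: le_trans markov _; rewrite factor expRD ler_pM2l ?expR_gt0 //.
rewrite expRM_natl; apply: lerXn2r; rewrite ?nnegrE; last exact: bernoulli_mgf_le.
- by case/andP: hp => p0 p1; rewrite addr_ge0 ?mulr_ge0 // ?subr_ge0 // ltW ?expR_gt0.
- exact: ltW (expR_gt0 _).
Qed.

Lemma ler_sum_cover2 {T : finType} {C C1 C2 : pred T} (f : T -> R) :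
  (forall v, 0 <= f v) -> (forall v, C v -> C1 v || C2 v) ->
  \sum_(v | C v) f v <= \sum_(v | C1 v) f v + \sum_(v | C2 v) f v.
Proof.
move=> f_ge0 hC; rewrite (big_mkcond C) (big_mkcond C1) (big_mkcond C2) -big_split /=.
apply: ler_sum => v _; case Cv: (C v); last by rewrite addr_ge0 //; case: ifP.
by case/orP: (hC v Cv) => ->; [rewrite lerDl | rewrite lerDr]; case: ifP.
Qed.

Lemma binomial_deviation_le n p t : (0 < n)%N -> 0 <= p <= 1 -> 0 <= t <= 1/6 ->
  \sum_(v : {ffun 'I_n -> bool} | t < `|n%:R^-1 * succ_count v - p|)
     \prod_(k < n) bernoulli_mass p (v k)
  <= 2 * expR (- (n%:R * t ^+ 2)).
Proof.
move=> n_gt0 hp /andP[t0 t1].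
have n_pos : (0 : R) < n%:R by rewrite ltr0n.
have two_sided (v : {ffun 'I_n -> bool}) : t < `|n%:R^-1 * succ_count v - p| ->
    (0 <= 2 * t * (succ_count v - n%:R * (p + t)))
    || (0 <= - (2 * t) * (succ_count v - n%:R * (p - t))).
  set s := n%:R^-1 * succ_count v.
  have -> : succ_count v = n%:R * s by rewrite /s mulrA mulfV ?mul1r // gt_eqF.
  have tn_ge0 : 0 <= t * n%:R by rewrite mulr_ge0 // ltW.
  by rewrite ltr_normr => /orP[dev|dev]; apply/orP; [left|right]; nra.
apply: le_trans (ler_sum_cover2 _ _ two_sided) _.
  by move=> v; apply: prodr_ge0 => k _; exact: bernoulli_mass_ge0.
have upper_exp : - (2 * t * (n%:R * (p + t))) + n%:R * (2 * t * p + (2 * t) ^+ 2 / 4)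
    = - (n%:R * t ^+ 2) by field.
have lower_exp :
    - (- (2 * t) * (n%:R * (p - t))) + n%:R * (- (2 * t) * p + (- (2 * t)) ^+ 2 / 4)
    = - (n%:R * t ^+ 2) by field.
rewrite [2 * expR _]mulr_natl mulr2n.
apply: lerD; [rewrite -{1}upper_exp | rewrite -lower_exp].
  by apply: chernoff_tail_le => //; lra.
by apply: chernoff_tail_le => //; lra.
Qed.
End chernoff.
Arguments bernoulli_mass {R}.

Section confidence_radius.
Variable R : realType.

Definition conf_radius (n : nat) : R := Num.sqrt (3 * ln (n%:R : R) / n%:R).

Lemma ln_lt_twice_sqrt (x : R) : 0 < x -> ln x < 2 * Num.sqrt x.
Proof.
move=> x_gt0; have s_gt0 : 0 < Num.sqrt x by rewrite sqrtr_gt0.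
rewrite -{1}(sqr_sqrtr (ltW x_gt0)) lnXn // -[ln _ *+ 2]mulr_natl.
by rewrite ltr_pM2l // ln_sublinear.
Qed.

Lemma conf_radius_lt (e : R) : 0 < e -> exists N, forall n, (N < n)%N -> conf_radius n < e.
Proof.
move=> e_gt0; exists (Num.truncn (36 / e ^+ 4)) => n n_big.
have n_gt0 : (0 : R) < n%:R by rewrite ltr0n (leq_ltn_trans _ n_big).
have e4_gt0 : 0 < e ^+ 4 by rewrite exprn_gt0.
have n_e4 : 36 < n%:R * e ^+ 4.
  by rewrite -ltr_pdivrMr // (lt_le_trans (truncnS_gt _)) // ler_nat.
set s := Num.sqrt (n%:R : R).
have s_gt0 : 0 < s by rewrite sqrtr_gt0.
have sE : s ^+ 2 = n%:R by rewrite sqr_sqrtr // ltW.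
have e2s_big : 6 < e ^+ 2 * s.
  have : (e ^+ 2 * s) ^+ 2 = n%:R * e ^+ 4 by rewrite -sE; ring.
  have := mulr_gt0 (exprn_gt0 2 e_gt0) s_gt0; nra.
have radius_sqr : 3 * ln (n%:R : R) / n%:R < e ^+ 2.
  rewrite ltr_pdivrMr // -[X in _ < _ * X]sE.
  have := ln_lt_twice_sqrt _ n_gt0; rewrite -/s; nra.
by rewrite -(ger0_norm (ltW e_gt0)) -sqrtr_sqr ltr_sqrt // exprn_gt0.
Qed.

Lemma expR_conf_radius n : (0 < n)%N ->
  expR (- (n%:R * conf_radius n ^+ 2)) = (n%:R ^+ 3)^-1.
Proof.
move=> n_gt0; have n_pos : (0 : R) < n%:R by rewrite ltr0n.
have ln_ge0 : 0 <= ln (n%:R : R) by rewrite ln_ge0 // ler1n.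
rewrite /conf_radius sqr_sqrtr; last by rewrite divr_ge0 // mulr_ge0.
rewrite mulrCA mulfV ?gt_eqF // mulr1.
by rewrite expRN expRM_natl lnK // posrE.
Qed.

End confidence_radius.

Section acceptance.
Variables (R : realType) (I : set nat) (qs : nat -> nat -> R) (eps : R).
Variables (q : nat -> R) (S : nat -> nat -> bool) (N1 : nat).
Hypothesis emp_mean_close : forall n, (N1 < n)%N ->
  forall j, (j < n.-1)%N -> `|emp_mean n S j - q j| <= conf_radius R n.

Lemma accepts_eventually_close i : exists N, forall n, (N < n)%N ->
  accepts qs eps n S i -> forall j, `|qs i j - q j| <= eps.
Proof.
have [[j far]|close] := pselect (exists j, eps < `|qs i j - q j|); last first.
  by exists 0%N => n _ _ j; rewrite leNgt; apply/negP => far; apply: close; exists j.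
have [N radius_small] := @conf_radius_lt R ((`|qs i j - q j| - eps) / 2) ltac:(lra).
exists (maxn (maxn N N1) j.+1) => n n_big accepted; exfalso.
have j_lt : (j < n.-1)%N by lia.
have := accepted j j_lt; have := emp_mean_close n ltac:(lia) j j_lt.
have := radius_small n ltac:(lia); have := ler_distD (emp_mean n S j) (qs i j) (q j).
rewrite /conf_radius; lra.
Qed.

Lemma accepts_eventually_close_upto m : exists N, forall n, (N < n)%N ->
  forall i, (i <= m)%N -> accepts qs eps n S i -> forall j, `|qs i j - q j| <= eps.
Proof.
elim: m => [|m [N IH]].
  have [N close] := accepts_eventually_close 0.
  by exists N => n n_big i; rewrite leqn0 => /eqP ->; exact: close.
have [N' close] := accepts_eventually_close m.+1.
exists (maxn N N') => n n_big i; rewrite leq_eqVlt => /orP[/eqP -> | i_le].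
  by apply: close; lia.
by apply: IH; lia.
Qed.

Lemma accepts_of_close i n : (N1 < n)%N -> (forall j, `|q j - qs i j| <= eps) ->
  accepts qs eps n S i.
Proof.
move=> n_big close j j_lt.
have emp_close := emp_mean_close n n_big j j_lt; rewrite distrC /conf_radius in emp_close.
have q_close := close j; rewrite distrC in q_close.
have := ler_distD (q j) (qs i j) (emp_mean n S j); lra.
Qed.

Lemma estimator_eventually_close istar : I istar -> (forall j, `|q j - qs istar j| <= eps) ->
  exists n0, forall n, (n0 < n)%N -> exists i,
    estimator_index I qs eps n S i /\ forall j, `|qs i j - q j| <= eps.
Proof.
move=> I_istar istar_close.
have [N close] := accepts_eventually_close_upto istar.
exists (maxn N N1) => n n_big.
pose good i := `[< I i /\ accepts qs eps n S i >].
have good_istar : good istar.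
  by apply/asboolP; split => //; apply: accepts_of_close => //; lia.
have [i /asboolP[I_i accepted] minimal] := ex_minnP (ex_intro good _ good_istar).
exists i; split.
  split=> //; split=> // i' i'_lt I_i' accepted'.
  by have := minimal i' (asboolT (conj I_i' accepted')); rewrite leqNgt i'_lt.
by apply: close accepted; [lia | exact: minimal].
Qed.

End acceptance.
Arguments estimator_eventually_close {R I qs eps q S N1}.

Lemma measure_bigsetU_le {d} {T : measurableType d} {R : realFieldType}
    (mu : {measure set T -> \bar R}) {I : Type} {r : seq I} {P : pred I} {F : I -> set T} :
  (forall i, measurable (F i)) ->
  (mu (\big[setU/set0]_(i <- r | P i) F i) <= \sum_(i <- r | P i) mu (F i))%E.
Proof.
move=> mF; elim: r => [|a r IH]; first by rewrite !big_nil measure0.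
rewrite !big_cons; case: (P a) => //.
by rewrite (le_trans (measureU2 _ _ _)) ?leeD //; exact: bigsetU_measurable.
Qed.

Lemma ae_eventually_notin {d} {T : measurableType d} {R : realType}
    (mu : {measure set T -> \bar R}) {F : (set T)^nat} :
  (forall k, measurable (F k)) -> (\sum_(k <oo) mu (F k) < +oo)%E ->
  {ae mu, forall w, exists n, forall k, (n <= k)%N -> ~ F k w}.
Proof.
move=> mF summable; exists (lim_sup_set F); split.
- by apply: bigcap_measurable => // k _; apply: bigcup_measurable => i _.
- exact: lim_sup_set_cvg0.
move=> w /= not_eventually n _; apply: contrapT => never; apply: not_eventually.
by exists n => k n_le Fkw; apply: never; exists k.
Qed.

Lemma sum_inv_sqr_le (R : realFieldType) K :
  \sum_(k < K) (if (1 < k)%N then (k%:R ^+ 2)^-1 else 0 : R) <= 1.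
Proof.
pose a k : R := if (1 < k)%N then (k%:R ^+ 2)^-1 else 0.
have a_ge0 k : 0 <= a k by rewrite /a; case: ifP.
(* telescoping: [1/(k+1)^2 <= 1/k - 1/(k+1)] *)
have partial K' : \sum_(k < K'.+2) a k <= 1 - K'.+1%:R^-1.
  elim: K' => [|K' IH]; first by rewrite !big_ord_recr big_ord0 /a /= add0r addr0 invr1 subrr.
  rewrite big_ord_recr /= (le_trans (lerD IH (lexx _))) // /a /= -natr1 -[K'.+2]addn1 natrD.
  have k_gt0 : (0 : R) < K'.+1%:R by rewrite ltr0n.
  rewrite -subr_ge0 (_ : _ - _ = (K'.+1%:R * (K'.+1%:R + 1) ^+ 2)^-1); last by field; lra.
  by rewrite invr_ge0 mulr_ge0 ?ltW // exprn_ge0 // addr_ge0 ?ltW.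
apply: le_trans (_ : \sum_(k < K.+2) a k <= _); last first.
  by rewrite (le_trans (partial K)) // lerBlDr lerDl invr_ge0.
rewrite -!(big_mkord xpredT a) [leRHS](big_cat_nat _ (n := K)) //= ?lerDl ?sumr_ge0 //; lia.
Qed.

Lemma coord_measurable (j : nat) (b : bool) : measurable [set x : bits_space | x j = b].
Proof. by apply: sub_sigma_algebra; exists j => //; exists [set b]. Qed.

Section coordinate_law.
Variables (R : realType) (mu : probability bits_space R).

Lemma measure_coord j b :
  mu [set x : bits_space | x j = b] = (bernoulli_mass (Mean mu j) b)%:E.
Proof.
have mu_true : mu [set x : bits_space | x j = true] = (Mean mu j)%:E.
  have indicE : (fun x : bits_space => ((x j : nat)%:R : R)%:E)
      = (fun x => (\1_[set x : bits_space | x j = true] x)%:E).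
    apply: funext => x; rewrite /indic; case xj: (x j) => /=; first by rewrite mem_set.
    by rewrite memNset //= xj.
  rewrite /Mean indicE integral_indic ?setIT //; last exact: coord_measurable.
  rewrite fineK // ge0_fin_numE ?measure_ge0 //.
  by rewrite (le_lt_trans (probability_le1 _ (coord_measurable j true))) ?ltey.
case: b => //=.
have -> : [set x : bits_space | x j = false] = ~` [set x | x j = true].
  by apply/seteqP; split=> x /=; case: (x j).
by rewrite probability_setC ?mu_true //; exact: coord_measurable.
Qed.

Lemma Mean_ge0_le1 j : 0 <= Mean mu j <= 1.
Proof.
have ge0 : (0 <= mu [set x : bits_space | x j = true])%E := measure_ge0 _ _.
have le1 : (mu [set x : bits_space | x j = true] <= 1)%E :=
  probability_le1 mu (coord_measurable j true).
rewrite measure_coord lee_fin in ge0; rewrite measure_coord lee_fin in le1.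
by rewrite ge0 le1.
Qed.

End coordinate_law.

Section iid_sample.
Variables (R : realType) (mu : probability bits_space R).
Variables (d : measure_display) (Omega : measurableType d) (P : probability Omega R).
Variable X : nat -> Omega -> bits_space.
Hypothesis iid : iid_with_law P X mu.

Definition coord_pattern n j (v : {ffun 'I_n -> bool}) : set Omega :=
  [set w | forall k : 'I_n, X k w j = v k].

(* the default [true] is never used: only indices [k < n] occur *)
Let pattern_coord {n} j (v : {ffun 'I_n -> bool}) (k : nat) : set bits_space :=
  [set x | x j = oapp v true (insub k : option 'I_n)].

Let coord_patternE n j v :
  coord_pattern n j v =
  \big[setI/setT]_(k <- index_iota 0 n) (X k @^-1` pattern_coord j v k).
Proof.
rewrite -bigcap_seq; apply/seteqP; split=> w /= pattern_w.
  move=> k; rewrite /= mem_index_iota => /andP[_ k_lt].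
  by rewrite /pattern_coord /= insubT /=; exact: pattern_w (Ordinal k_lt).
move=> k; have := pattern_w (val k).
by rewrite /= mem_index_iota ltn_ord /pattern_coord /= valK; exact.
Qed.

Lemma measurable_coord_pattern n j v : measurable (coord_pattern n j v).
Proof.
rewrite coord_patternE; apply: bigsetI_measurable => k _.
by rewrite -[_ @^-1` _]setTI; apply: iid.1 => //; exact: coord_measurable.
Qed.

Lemma probability_coord_pattern n j v :
  P (coord_pattern n j v) = (\prod_(k < n) bernoulli_mass (Mean mu j) (v k))%:E.
Proof.
rewrite coord_patternE iid.2 ?iota_uniq //; last by move=> k; exact: coord_measurable.
rewrite big_mkord -prodEFin; apply: eq_bigr => k _.
by rewrite /pattern_coord valK measure_coord.
Qed.

Definition deviation_event n j (t : R) : set Omega :=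
  \big[setU/set0]_(v : {ffun 'I_n -> bool} |
      t < `|n%:R^-1 * \sum_(k < n) (v k : nat)%:R - Mean mu j|) coord_pattern n j v.

Lemma deviation_event_le n j t : (0 < n)%N -> 0 <= t <= 1/6 ->
  (P (deviation_event n j t) <= (2 * expR (- (n%:R * t ^+ 2)))%:E)%E.
Proof.
move=> n_gt0 t_small.
apply: le_trans (measure_bigsetU_le P (measurable_coord_pattern n j)) _.
pose mass (v : {ffun 'I_n -> bool}) := \prod_(k < n) bernoulli_mass (Mean mu j) (v k).
rewrite (eq_bigr (fun v => (mass v)%:E)); last by move=> v _; exact: probability_coord_pattern.
by rewrite sumEFin lee_fin binomial_deviation_le // Mean_ge0_le1.
Qed.

Definition bad_event n : set Omega :=
  \big[setU/set0]_(j < n.-1) deviation_event n j (conf_radius R n).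

Lemma measurable_bad_event n : measurable (bad_event n).
Proof.
apply: bigsetU_measurable => j _; apply: bigsetU_measurable => v _.
exact: measurable_coord_pattern.
Qed.

Lemma bad_event_le n : (0 < n)%N -> conf_radius R n <= 1/6 ->
  (P (bad_event n) <= (2 / n%:R ^+ 2)%:E)%E.
Proof.
move=> n_gt0 radius_small.
have n_pos : (0 : R) < n%:R by rewrite ltr0n.
apply: le_trans (Boole_inequality P (A := fun j => deviation_event n j (conf_radius R n)) _) _.
  by move=> j _; apply: bigsetU_measurable => v _; exact: measurable_coord_pattern.
apply: le_trans (_ : (\sum_(j < n.-1) (2 * (n%:R ^+ 3)^-1)%:E <= _)%E).
  apply: lee_sum => j _; rewrite -expR_conf_radius //; apply: deviation_event_le => //.
  by rewrite radius_small sqrtr_ge0.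
rewrite sumEFin lee_fin sumr_const card_ord -[_ *+ n.-1]mulr_natr.
rewrite (_ : 2 / n%:R ^+ 2 = 2 / n%:R ^+ 3 * n%:R); last by field; rewrite gt_eqF.
by rewrite ler_wpM2l ?ler_nat ?leq_pred // divr_ge0 // exprn_ge0.
Qed.

Lemma emp_mean_close_of_notin_bad w n : ~ bad_event n w ->
  forall j, (j < n.-1)%N ->
    `|emp_mean n (fun k => X k w) j - Mean mu j| <= conf_radius R n.
Proof.
move=> not_bad j j_lt; rewrite leNgt; apply/negP => far; apply: not_bad.
apply: (bigsetU_sup (F := fun j => deviation_event n j (conf_radius R n)) j_lt).
rewrite /deviation_event (bigD1 [ffun k : 'I_n => X k w j]) /=.
  by left => k; rewrite ffunE.
by congr (_ < `|_ * _ - _|): far; apply: eq_bigr => k _; rewrite ffunE.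
Qed.

Lemma ae_emp_mean_close : {ae P, forall w, exists N1, forall n, (N1 < n)%N ->
  forall j, (j < n.-1)%N -> `|emp_mean n (fun k => X k w) j - Mean mu j| <= conf_radius R n}.
Proof.
have [N0 radius_small] := @conf_radius_lt R (1/6) ltac:(lra).
pose N := maxn N0 1.
pose F k := if (N < k)%N then bad_event k else set0.
have mF k : measurable (F k).
  by rewrite /F; case: ifP => _; [exact: measurable_bad_event | exact: measurable0].
have F_le k : (P (F k) <= (2 * if (1 < k)%N then (k%:R ^+ 2)^-1 else 0)%:E)%E.
  rewrite /F; case: ifPn => k_big; last by rewrite measure0 lee_fin mulr_ge0 //; case: ifP.
  rewrite ifT; last by lia.
  by apply: bad_event_le => //; [lia | apply/ltW/radius_small; lia].
have summable : (\sum_(k <oo) P (F k) < +oo)%E.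
  apply: (@le_lt_trans _ _ 2%:E); last exact: ltey.
  apply: lime_le; first by apply: is_cvg_nneseries => k _ _; exact: measure_ge0.
  apply: nearW => K; rewrite big_mkord.
  apply: le_trans (_ : \sum_(k < K) (2 * if (1 < k)%N then (k%:R ^+ 2)^-1 else 0)%:E <= _)%E.
    by apply: lee_sum => k _; exact: F_le.
  by rewrite sumEFin lee_fin -mulr_sumr ler_piMr // sum_inv_sqr_le.
move: (ae_eventually_notin P mF summable); apply: filterS => w [n not_bad].
exists (maxn n N) => m m_big; apply: emp_mean_close_of_notin_bad.
by have := not_bad m ltac:(lia); rewrite /F ifT //; lia.
Qed.

End iid_sample.
Arguments ae_emp_mean_close {R mu d Omega P X}.

Theorem lemma1 (R : realType) (Q : set (probability bits_space R)) (eps : R)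
    (I : set nat) (qs : nat -> nat -> R)
    (heps : 0 <= eps)
    (hI : forall i, I i -> forall j, 0 <= qs i j <= 1)
    (hcover : forall mu, Q mu -> exists2 i, I i & forall j, `|Mean mu j - qs i j| <= eps)
    (d : measure_display) (Omega : measurableType d) (P : probability Omega R)
    (mu : probability bits_space R) (hmu : Q mu)
    (X : nat -> Omega -> bits_space) (hX : iid_with_law P X mu) :
  {ae P, forall w : Omega, exists n0 : nat, forall n : nat, (n0 < n)%N ->
     exists i : nat, estimator_index I qs eps n (fun k => X k w) i /\
       forall j : nat, `|qs i j - Mean mu j| <= eps}.
Proof.
have [istar I_istar istar_close] := hcover mu hmu.
move: (ae_emp_mean_close hX); apply: filterS => w [N1 emp_mean_close].
exact: estimator_eventually_close emp_mean_close _ I_istar istar_close.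
Qed.
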